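(* For all positive integers $n,k$ and every $\boldsymbol\rho=(\rho_1,\dots,\rho_k)$ of integers with $1\le\rho_\ell\le n\le k$ for all $\ell\in[k]$ and $\sum_{\ell\in[k]}\rho_\ell=n^2$, there exists a $\boldsymbol\rho$-latin square of order $n$.
   Context: A $\boldsymbol\rho$-latin square of order $n$ is an $n\times n$ array in which every cell contains a symbol of $[k]$, each symbol occurs at most once in each row and at most once in each column, and each symbol $\ell$ occurs exactly $\rho_\ell$ times. *)

From mathcomp Require Import all_boot.
Set Implicit Arguments. Unset Strict Implicit. Unset Printing Implicit Defensive.

Definition rho_latin_square (n k : nat) (rho : 'I_k -> nat)
    (L : 'I_n -> 'I_n -> 'I_k) : Prop :=
  [/\ (forall i, injective (L i)),
      (forall j, injective (fun i => L i j)) &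
      (forall l : 'I_k, #|[set p : 'I_n * 'I_n | L p.1 p.2 == l]| = rho l)].

(* Order the symbols so that those with [rho l = n] come first and cut
   [0, n^2) into consecutive blocks, block [l] of length [rho l].  Read the
   n x n array along its n cyclic diagonals, one after the other, so that the
   cell at position [d * n + i] is (i, i + d mod n), and fill it with the
   symbol whose block contains that position.  A block has length at most [n],
   so it never meets the same row twice, as two cells of one row are [n]
   positions apart.  Two cells of one column are at least [n - 1] positions
   apart and lie on different diagonals, so only a block of length [n] could
   meet a column twice; but such a block starts at a multiple of [n], i.e. it
   is exactly one diagonal. *)
From mathcomp Require Import all_boot zify.

Set Implicit Arguments.
Unset Strict Implicit.
Unset Printing Implicit Defensive.

Lemma sum_window N a b : \sum_(t < N) (a <= t < b) = minn b N - minn a N.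
Proof.
elim: N => [|N IHN]; first by rewrite big_ord0; lia.
by rewrite big_ord_recr /= IHN; case: (leqP a N); case: (ltnP N b) => /=; lia.
Qed.

Lemma sum_pred_card (T : finType) (P : pred T) : \sum_i P i = #|P|.
Proof. by rewrite -sum1_card [RHS]big_mkcond. Qed.

Section Blocks.

Variables (I : finType) (w : I -> nat) (key : I -> nat).
Hypothesis key_inj : injective key.

Definition block_start l := \sum_(l' | key l' < key l) w l'.

Definition in_block t l := block_start l <= t < block_start l + w l.

Lemma block_end_le (P : pred I) l :
  P l -> (forall l', key l' < key l -> P l') ->
  block_start l + w l <= \sum_(l' | P l') w l'.
Proof.
move=> Pl P_below; rewrite (bigID (fun l' => key l' < key l)) /=.
rewrite [in X in _ <= X + _](eq_bigl (fun l' => key l' < key l)) => [|l'].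
  by rewrite /block_start leq_add2l (bigD1 l) /= ?Pl ?ltnn // leq_addr.
by case: ltnP; rewrite ?andbT ?andbF // => /P_below.
Qed.

Lemma block_end_le_start l1 l2 :
  key l1 < key l2 -> block_start l1 + w l1 <= block_start l2.
Proof. by move=> lt12; apply: block_end_le => // l /ltn_trans; apply. Qed.

Lemma block_end_le_sum l : block_start l + w l <= \sum_l' w l'.
Proof. exact: block_end_le. Qed.

Lemma block_start_dvd m l :
  (forall l', key l' < key l -> w l' = m) -> m %| block_start l.
Proof. by move=> below_m; apply: dvdn_sum => l' /below_m ->. Qed.

Lemma in_block_inj t l1 l2 : in_block t l1 -> in_block t l2 -> l1 = l2.
Proof.
move=> in1 in2; have [lt12|lt21|/key_inj //] := ltngtP (key l1) (key l2).
- by have := block_end_le_start lt12; move: in1 in2; rewrite /in_block; lia.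
- by have := block_end_le_start lt21; move: in1 in2; rewrite /in_block; lia.
Qed.

Lemma card_block l : \sum_(t < \sum_l' w l') in_block t l = w l.
Proof. by rewrite sum_window; have := block_end_le_sum l; lia. Qed.

Lemma in_block_cover t : t < \sum_l w l -> exists l, in_block t l.
Proof.
(* The blocks are disjoint and their lengths add up to N, so none of [0, N) is missed. *)
set N := \sum_l w l => ltNt; have [l|no_block] := pickP (in_block t); first by exists l.
have at_most_one (t' : 'I_N) : \sum_l in_block t' l <= (t' != Ordinal ltNt).
  rewrite sum_pred_card; have [->|_] := eqVneq t' (Ordinal ltNt).
    by rewrite leqn0; apply/eqP/eq_card0.
  by apply/card_le1_eqP => l1 l2 in1 in2; apply: in_block_inj in2 in1.
have : \sum_(t' < N) \sum_l in_block t' l <= \sum_(t' < N) (t' != Ordinal ltNt).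
  by apply: leq_sum => t' _; apply: at_most_one.
rewrite exchange_big (eq_bigr _ (fun l _ => card_block l)) sum_pred_card.
by rewrite cardC1 card_ord -/N; lia.
Qed.

Variable default : I.

Definition block_of t := odflt default [pick l | in_block t l].

Lemma block_ofE t l : t < \sum_l' w l' -> (block_of t == l) = in_block t l.
Proof.
move=> /in_block_cover[l0 in0]; rewrite /block_of; case: pickP => [l1 in1|no_block].
  by apply/eqP/idP => [<- //|]; apply: in_block_inj.
by rewrite no_block in in0.
Qed.

End Blocks.

Lemma mulnD_window_eq n s r a b i :
  r <= n -> s <= a * n + i < s + r -> s <= b * n + i < s + r -> a = b.
Proof. by move=> *; nia. Qed.

Lemma mulnD_block_eq n c d i : i < n -> c * n <= d * n + i < c * n + n -> d = c.
Proof. by move=> *; nia. Qed.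

Section CyclicDiagonals.

Variable n : nat.

Definition diag (i j : nat) := if i <= j then j - i else j + n - i.

Lemma diag_lt (i j : 'I_n) : diag i j < n.
Proof. by rewrite /diag; have := ltn_ord i; have := ltn_ord j; case: ifP; lia. Qed.

Lemma diag_cases (i j : 'I_n) : i + diag i j = j \/ i + diag i j = j + n.
Proof. by rewrite /diag; have := ltn_ord i; case: ifP; lia. Qed.

Definition cell_pos (i j : 'I_n) := diag i j * n + i.

Lemma cell_pos_lt (i j : 'I_n) : cell_pos i j < n * n.
Proof. by have := diag_lt i j; have := ltn_ord i; rewrite /cell_pos; nia. Qed.

Definition cell_ord (c : 'I_n * 'I_n) : 'I_(n * n) := Ordinal (cell_pos_lt c.1 c.2).

Lemma cell_ord_bij : bijective cell_ord.
Proof.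
apply: inj_card_bij; last by rewrite card_prod !card_ord.
move=> [i1 j1] [i2 j2] /(congr1 val); rewrite /cell_pos /= => eq_pos.
have n_gt0 : 0 < n := leq_ltn_trans (leq0n i1) (ltn_ord i1).
have eq_i : i1 = i2 :> nat.
  by move/(congr1 (modn^~ n)): eq_pos; rewrite !modnMDl !modn_small.
have eq_diag : diag i1 j1 = diag i2 j2.
  by move/(congr1 (divn^~ n)): eq_pos; rewrite !divnMDl ?divn_small ?addn0.
have := diag_cases i1 j1; have := diag_cases i2 j2.
by have := ltn_ord j1; have := ltn_ord j2; move=> *; congr pair; apply: val_inj => /=; lia.
Qed.

Lemma sum_cell_pos (F : nat -> nat) :
  \sum_(c : 'I_n * 'I_n) F (cell_pos c.1 c.2) = \sum_(t < n * n) F t.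
Proof. by rewrite (reindex cell_ord) //; apply/onW_bij/cell_ord_bij. Qed.

Lemma window_same_row (i j1 j2 : 'I_n) s r :
  r <= n -> s <= cell_pos i j1 < s + r -> s <= cell_pos i j2 < s + r -> j1 = j2.
Proof.
move=> le_rn in1 in2; have eq_diag := mulnD_window_eq le_rn in1 in2.
have := diag_cases i j1; have := diag_cases i j2.
by have := ltn_ord j1; have := ltn_ord j2; move=> *; apply: val_inj => /=; lia.
Qed.

Lemma diag_inj_col (i1 i2 j : 'I_n) : diag i1 j = diag i2 j -> i1 = i2.
Proof.
move=> eq_diag; have := diag_cases i1 j; have := diag_cases i2 j.
by have := ltn_ord i1; have := ltn_ord i2; move=> *; apply: val_inj => /=; lia.
Qed.

Lemma cell_pos_col_gap (i1 i2 j : 'I_n) :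
  diag i1 j < diag i2 j -> cell_pos i1 j + n.-1 <= cell_pos i2 j.
Proof.
rewrite /cell_pos => lt12; have := diag_cases i1 j; have := diag_cases i2 j.
have := ltn_ord i1; have := ltn_ord i2.
by have [->|] := eqVneq (diag i2 j) (diag i1 j).+1; move=> *; nia.
Qed.

Lemma window_same_col (i1 i2 j : 'I_n) s r :
  r <= n -> r < n \/ n %| s ->
  s <= cell_pos i1 j < s + r -> s <= cell_pos i2 j < s + r -> i1 = i2.
Proof.
wlog le12 : i1 i2 / diag i1 j <= diag i2 j => [sym_case le_rn short_or_aligned in1 in2|].
  case: (leqP (diag i1 j) (diag i2 j)) => [le12|/ltnW le21].
    exact: sym_case in1 in2.
  by apply: esym; apply: sym_case in2 in1.
move=> le_rn short_or_aligned in1 in2.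
move: le12; rewrite leq_eqVlt => /orP[/eqP|lt12]; first exact: diag_inj_col.
have gap := cell_pos_col_gap lt12.
case: short_or_aligned => [lt_rn|/dvdnP[c def_s]]; first by lia.
rewrite def_s /cell_pos in in1 in2 gap.
have diag1 : diag i1 j = c by apply: (mulnD_block_eq (ltn_ord i1)); lia.
have diag2 : diag i2 j = c by apply: (mulnD_block_eq (ltn_ord i2)); lia.
by move: lt12; rewrite diag1 diag2 ltnn.
Qed.

End CyclicDiagonals.

Section FullFirst.

Variables (k n : nat) (rho : 'I_k -> nat).

Definition full_first_key (l : 'I_k) := (rho l != n) * k + l.

Lemma full_first_key_inj : injective full_first_key.
Proof.
move=> l1 l2; rewrite /full_first_key => eq_key; apply: val_inj.
by move: eq_key (ltn_ord l1) (ltn_ord l2); case: (rho l1 != n); case: (rho l2 != n) => /=; lia.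
Qed.

Lemma full_first_key_full l l' :
  rho l = n -> full_first_key l' < full_first_key l -> rho l' = n.
Proof.
rewrite /full_first_key => ->; rewrite eqxx /=.
by case: eqP => // _ /=; have := ltn_ord l; lia.
Qed.

End FullFirst.

Theorem theorem2p2 (n k : nat) (rho : 'I_k -> nat) :
  0 < n -> 0 < k -> n <= k ->
  (forall l : 'I_k, 1 <= rho l <= n) ->
  \sum_(l < k) rho l = n ^ 2 ->
  exists L : 'I_n -> 'I_n -> 'I_k, rho_latin_square rho L.
Proof.
move=> _ k_gt0 _ rho_bounds; rewrite -mulnn => rho_sum.
pose key := full_first_key n rho.
pose sym := block_of rho key (Ordinal k_gt0).
have symE (i j : 'I_n) l : (sym (cell_pos i j) == l) = in_block rho key (cell_pos i j) l.
  by rewrite (block_ofE (@full_first_key_inj _ n rho)) // rho_sum cell_pos_lt.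
have in_sym (i j : 'I_n) : in_block rho key (cell_pos i j) (sym (cell_pos i j)).
  by rewrite -symE.
exists (fun i j => sym (cell_pos i j)); split => /=.
- move=> i j1 j2 same_sym; have := in_sym i j2; rewrite -same_sym.
  by apply: window_same_row (in_sym i j1); case/andP: (rho_bounds (sym (cell_pos i j1))).
- move=> j i1 i2 same_sym; have := in_sym i2 j; rewrite -same_sym.
  set l := sym _; have /andP[_ le_rn] := rho_bounds l.
  apply: window_same_col (in_sym i1 j) => //.
  have [lt_rn|full_l] : rho l < n \/ rho l = n by lia.
    by left.
  by right; apply/block_start_dvd => l'; apply: full_first_key_full.
- move=> l; rewrite cardsE -sum_pred_card -(card_block rho key l).
  rewrite rho_sum -(sum_cell_pos n (fun t => in_block rho key t l)).
  by apply: eq_bigr => c _; rewrite -symE.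
Qed.
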